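(* Let $C_1,h>0$ and $\varphi_1(x)=\frac{1}{C_1}\varphi_0(x/h)$. Let $f:\mathbb{R}\to\mathbb{R}$ be convex with $|f'|\le 1/(C_1h)$. Then for every $x\in\mathbb{R}$, $(f\,\square\,\varphi_1)(x)\le f(x)-\frac{C_1}{2}\,|(Df)(x)|^2.$
   Context: $\varphi_0(x)=\frac12x^2$ for $|x|\le1$ and $\varphi_0(x)=|x|-\frac12$ for $|x|>1$; $(f\,\square\,\varphi)(x)=\inf_y\{f(y)+\varphi(x-y)\}$; $f'(x)=\limsup_{s\to0}(f(x+s)-f(x))/s$. For convex $f$, let $x_0$ be a point where $f$ attains its minimum; if no minimum is attained, $x_0=-\infty$ if $f$ is non-decreasing and $x_0=+\infty$ if $f$ is non-increasing. The discrete gradient with step $h$ is $(Df)(x)=f(x)-f(x-h)$ for $x>x_0+h$, $(Df)(x)=f(x)-f(x_0)$ for $x\in[x_0-h,x_0+h]$, $(Df)(x)=f(x)-f(x+h)$ for $x<x_0-h$. *)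

From Stdlib Require Import Reals Lra Classical ClassicalEpsilon ClassicalDescription.
Open Scope R_scope.

Definition phi0 (x : R) : R :=
  if Rle_dec (Rabs x) 1 then x ^ 2 / 2 else Rabs x - 1 / 2.

Definition is_glb (E : R -> Prop) (m : R) : Prop :=
  (forall v, E v -> m <= v) /\ (forall b, (forall v, E v -> b <= v) -> b <= m).

(* infimum of E (junk value 0 if E has no real infimum) *)
Definition Inf (E : R -> Prop) : R :=
  match excluded_middle_informative (exists m, is_glb E m) with
  | left H => proj1_sig (constructive_indefinite_description _ H)
  | right _ => 0
  end.

Definition infconv (f phi : R -> R) (x : R) : R :=
  Inf (fun v => exists y, v = f y + phi (x - y)).

Definition is_limsup0 (g : R -> R) (l : R) : Prop :=
  (forall eps, 0 < eps -> exists delta, 0 < delta /\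
     forall s, s <> 0 -> Rabs s < delta -> g s <= l + eps) /\
  (forall eps delta, 0 < eps -> 0 < delta ->
     exists s, s <> 0 /\ Rabs s < delta /\ l - eps <= g s).

(* f'(x) = l, where f'(x) := limsup_{s->0} (f(x+s) - f(x))/s *)
Definition upper_deriv (f : R -> R) (x l : R) : Prop :=
  is_limsup0 (fun s => (f (x + s) - f x) / s) l.

Definition convex (f : R -> R) : Prop :=
  forall x y t, 0 <= t <= 1 -> f (t * x + (1 - t) * y) <= t * f x + (1 - t) * f y.

Inductive ext_point : Type := Fin (r : R) | MInf | PInf.

Definition valid_x0 (f : R -> R) (x0 : ext_point) : Prop :=
  match x0 with
  | Fin r => forall y, f r <= f y
  | MInf => (~ exists r, forall y, f r <= f y) /\ (forall a b, a <= b -> f a <= f b)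
  | PInf => (~ exists r, forall y, f r <= f y) /\ (forall a b, a <= b -> f b <= f a)
  end.

Definition Dgrad (f : R -> R) (h : R) (x0 : ext_point) (x : R) : R :=
  match x0 with
  | Fin r =>
      if Rlt_dec (r + h) x then f x - f (x - h)
      else if Rle_dec (r - h) x then f x - f r
      else f x - f (x + h)
  | MInf => f x - f (x - h)
  | PInf => f x - f (x + h)
  end.

(* Let [z] be the neighbour of [x] at distance at most [h] used by the discrete
   gradient, so that [D := f x - f z = (Df)(x) >= 0].  Testing the infimal
   convolution at the convex combination [y = x - C1 D (x - z)] gives the
   claim: the Lipschitz bound [|f'| <= 1/(C1 h)] yields [C1 D <= 1], hence
   [|x - y| <= h] and [phi1 (x - y) <= C1 D^2 / 2], while convexity yields
   [f y <= f x - C1 D^2].  The same Lipschitz bound shows that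
   [f y + phi1 (x - y) >= f x - 1/(2 C1)] for all [y], so the infimum is a
   genuine real number. *)

From Stdlib Require Import Reals Lra ClassicalEpsilon ClassicalDescription.
Open Scope R_scope.

Section ConvexFunction.

Variable f : R -> R.
Hypothesis f_convex : convex f.

Lemma convex_chord p m q : p < m < q ->
  f m * (q - p) <= (q - m) * f p + (m - p) * f q.
Proof.
  intros Hpmq.
  set (t := (q - m) / (q - p)).
  assert (Ht : 0 <= t <= 1).
  { unfold t; split.
    - apply Rmult_le_pos; [lra | left; apply Rinv_0_lt_compat; lra].
    - apply (Rmult_le_reg_r (q - p)); [lra |].
      unfold Rdiv; rewrite Rmult_assoc, Rinv_l; lra. }
  assert (Hm : t * p + (1 - t) * q = m) by (unfold t; field; lra).
  pose proof (f_convex p q t Ht) as Hconv; rewrite Hm in Hconv.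
  apply Rle_trans with ((t * f p + (1 - t) * f q) * (q - p)).
  - apply Rmult_le_compat_r; lra.
  - right; unfold t; field; lra.
Qed.

Lemma convex_slope_le_secant a b s : a < b -> s <> 0 -> a + s < b ->
  (f (a + s) - f a) / s <= (f b - f a) / (b - a).
Proof.
  intros Hab Hs Hsb.
  set (q := (f (a + s) - f a) / s); set (S := (f b - f a) / (b - a)).
  assert (Hq : q * s = f (a + s) - f a) by (unfold q; field; lra).
  assert (HS : S * (b - a) = f b - f a) by (unfold S; field; lra).
  destruct (Rlt_or_le 0 s) as [Hpos | Hneg].
  - pose proof (convex_chord a (a + s) b ltac:(lra)) as Hchord.
    apply (Rmult_le_reg_r (s * (b - a))); nra.
  - pose proof (convex_chord (a + s) a b ltac:(lra)) as Hchord.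
    apply (Rmult_le_reg_r (- s * (b - a))); nra.
Qed.

Lemma convex_secant_le_slope a b s : a < b -> 0 < s ->
  (f b - f a) / (b - a) <= (f (b + s) - f b) / s.
Proof.
  intros Hab Hs.
  set (q := (f (b + s) - f b) / s); set (S := (f b - f a) / (b - a)).
  assert (Hq : q * s = f (b + s) - f b) by (unfold q; field; lra).
  assert (HS : S * (b - a) = f b - f a) by (unfold S; field; lra).
  pose proof (convex_chord a b (b + s) ltac:(lra)) as Hchord.
  apply (Rmult_le_reg_r (s * (b - a))); nra.
Qed.

Lemma convex_nondecreasing_right_of_min r a b :
  (forall y, f r <= f y) -> r <= a -> a <= b -> f a <= f b.
Proof.
  intros Hmin Hra Hab.
  destruct (Req_dec r a) as [<- | Hne]; [apply Hmin |].
  destruct (Req_dec a b) as [<- | Hne']; [lra |].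
  pose proof (convex_chord r a b ltac:(lra)) as Hchord.
  specialize (Hmin a).
  apply (Rmult_le_reg_l (a - r)); nra.
Qed.

Lemma convex_nonincreasing_left_of_min r a b :
  (forall y, f r <= f y) -> a <= b -> b <= r -> f b <= f a.
Proof.
  intros Hmin Hab Hbr.
  destruct (Req_dec b r) as [-> | Hne]; [apply Hmin |].
  destruct (Req_dec a b) as [-> | Hne']; [lra |].
  pose proof (convex_chord a b r ltac:(lra)) as Hchord.
  specialize (Hmin b).
  apply (Rmult_le_reg_l (r - b)); nra.
Qed.

End ConvexFunction.

Lemma is_limsup0_ge g l M :
  is_limsup0 g l -> (forall s, 0 < s -> M <= g s) -> M <= l.
Proof.
  intros [Hup _] HM.
  apply le_epsilon; intros eps Heps.
  destruct (Hup eps Heps) as [delta [Hdelta Hg]].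
  specialize (Hg (delta / 2) ltac:(lra) ltac:(rewrite Rabs_pos_eq; lra)).
  specialize (HM (delta / 2) ltac:(lra)).
  lra.
Qed.

Lemma is_limsup0_le g l M delta : 0 < delta -> is_limsup0 g l ->
  (forall s, s <> 0 -> Rabs s < delta -> g s <= M) -> l <= M.
Proof.
  intros Hdelta [_ Hlow] HM.
  apply Rnot_lt_le; intros HMl.
  destruct (Hlow ((l - M) / 2) delta ltac:(lra) Hdelta) as [s [Hs [Hsd Hg]]].
  specialize (HM s Hs Hsd).
  lra.
Qed.

Lemma convex_upper_deriv_le_secant f a b l : convex f ->
  upper_deriv f a l -> a < b -> l <= (f b - f a) / (b - a).
Proof.
  intros Hconv Hl Hab.
  apply (is_limsup0_le (fun s => (f (a + s) - f a) / s) _ _ (b - a));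
    [lra | exact Hl |].
  intros s Hs Hsd.
  apply convex_slope_le_secant; try assumption.
  pose proof (Rle_abs s); lra.
Qed.

Lemma convex_secant_le_upper_deriv f a b l : convex f ->
  upper_deriv f b l -> a < b -> (f b - f a) / (b - a) <= l.
Proof.
  intros Hconv Hl Hab.
  apply (is_limsup0_ge (fun s => (f (b + s) - f b) / s) _ _ Hl).
  intros s Hs; apply convex_secant_le_slope; assumption.
Qed.

Lemma convex_Lipschitz_of_upper_deriv f L : convex f ->
  (forall x, exists l, upper_deriv f x l /\ Rabs l <= L) ->
  forall a b, Rabs (f a - f b) <= L * Rabs (a - b).
Proof.
  intros Hconv Hderiv.
  assert (Hlt : forall a b, a < b -> Rabs (f b - f a) <= L * (b - a)).
  { intros a b Hab.
    destruct (Hderiv a) as [la [Hla Hla_bound]].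
    destruct (Hderiv b) as [lb [Hlb Hlb_bound]].
    pose proof (convex_upper_deriv_le_secant f a b la Hconv Hla Hab).
    pose proof (convex_secant_le_upper_deriv f a b lb Hconv Hlb Hab).
    assert (- L <= la /\ lb <= L) by (revert Hla_bound Hlb_bound; split_Rabs; lra).
    replace (f b - f a) with ((f b - f a) / (b - a) * (b - a)) by (field; lra).
    rewrite Rabs_mult, (Rabs_pos_eq (b - a)) by lra.
    apply Rmult_le_compat_r; [lra |].
    apply Rabs_le; lra. }
  intros a b.
  destruct (Rtotal_order a b) as [Hab | [-> | Hba]].
  - rewrite Rabs_minus_sym, (Rabs_minus_sym a), (Rabs_pos_eq (b - a)) by lra.
    now apply Hlt.
  - rewrite !Rminus_diag, Rabs_R0, Rmult_0_r; lra.
  - rewrite (Rabs_pos_eq (a - b)) by lra. now apply Hlt.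
Qed.

Lemma Inf_le_of_minorant E M v :
  (forall w, E w -> M <= w) -> E v -> Inf E <= v.
Proof.
  intros HM Hv.
  assert (Hglb : exists m, is_glb E m).
  { destruct (completeness (fun w => E (- w))) as [m [Hub Hleast]].
    - exists (- M); intros w Hw; specialize (HM _ Hw); lra.
    - exists (- v); rewrite Ropp_involutive; exact Hv.
    - exists (- m); split.
      + intros w Hw. assert (- w <= m); [| lra].
        apply Hub; rewrite Ropp_involutive; exact Hw.
      + intros b Hb. assert (m <= - b); [| lra].
        apply Hleast; intros w Hw; specialize (Hb _ Hw); lra. }
  unfold Inf.
  destruct (excluded_middle_informative (exists m, is_glb E m)) as [H | H];
    [| contradiction].
  destruct (constructive_indefinite_description _ H) as [m Hm]; simpl.
  apply Hm, Hv.
Qed.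

Lemma infconv_le f phi x y M :
  (forall y', M <= f y' + phi (x - y')) -> infconv f phi x <= f y + phi (x - y).
Proof.
  intros HM. apply (Inf_le_of_minorant _ M); [| now exists y].
  intros w [y' ->]; apply HM.
Qed.

Lemma phi0_ge w : Rabs w - 1 / 2 <= phi0 w.
Proof.
  unfold phi0; destruct (Rle_dec (Rabs w) 1); [| lra].
  rewrite <- (pow2_abs w); pose proof (Rabs_pos w); nra.
Qed.

Lemma phi0_quadratic w : Rabs w <= 1 -> phi0 w = w ^ 2 / 2.
Proof. intros Hw; unfold phi0; destruct (Rle_dec (Rabs w) 1); [reflexivity | lra]. Qed.

Section HuberEnvelope.

Variables (C1 h : R) (f : R -> R).
Hypotheses (C1_pos : 0 < C1) (h_pos : 0 < h) (f_convex : convex f).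
Hypothesis f_Lipschitz : forall a b, Rabs (f a - f b) <= 1 / (C1 * h) * Rabs (a - b).

Let phi1 z := / C1 * phi0 (z / h).

Lemma Rabs_div_h z : Rabs (z / h) = Rabs z / h.
Proof. unfold Rdiv; rewrite Rabs_mult, Rabs_inv, (Rabs_pos_eq h) by lra; reflexivity. Qed.

Lemma huber_envelope_minorant x y : f x - / (2 * C1) <= f y + phi1 (x - y).
Proof.
  unfold phi1.
  pose proof (f_Lipschitz x y) as Hlip; pose proof (Rle_abs (f x - f y)).
  pose proof (phi0_ge ((x - y) / h)) as Hphi; rewrite Rabs_div_h in Hphi.
  assert (Hscale : / C1 * (Rabs (x - y) / h) = 1 / (C1 * h) * Rabs (x - y))
    by (field; lra).
  apply Rmult_le_compat_l with (r := / C1) in Hphi;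
    [| left; apply Rinv_0_lt_compat; lra].
  replace (/ (2 * C1)) with (/ C1 * (1 / 2)) by (field; lra).
  lra.
Qed.

Lemma huber_envelope_test_point x z :
  Rabs (x - z) <= h -> 0 <= f x - f z ->
  exists y, f y + phi1 (x - y) <= f x - C1 / 2 * (f x - f z) ^ 2.
Proof.
  intros Hxz HD.
  set (D := f x - f z) in *.
  set (u := C1 * D).
  assert (Hu : 0 <= u <= 1).
  { pose proof (f_Lipschitz x z) as Hlip; pose proof (Rle_abs D).
    assert (HD1 : D <= / C1).
    { apply Rle_trans with (1 / (C1 * h) * h); [| right; field; lra].
      assert (0 < 1 / (C1 * h)) by (apply Rdiv_lt_0_compat; nra).
      fold D in Hlip; nra. }
    unfold u; split; [nra |].
    apply Rmult_le_compat_l with (r := C1) in HD1; [| lra].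
    rewrite Rinv_r in HD1; lra. }
  exists ((1 - u) * x + (1 - (1 - u)) * z).
  pose proof (f_convex x z (1 - u) ltac:(lra)) as Hconv.
  unfold phi1.
  replace ((x - ((1 - u) * x + (1 - (1 - u)) * z)) / h) with (u * ((x - z) / h))
    by (field; lra).
  assert (Hw : Rabs ((x - z) / h) <= 1).
  { rewrite Rabs_div_h. apply (Rmult_le_reg_r h); [lra |].
    unfold Rdiv; rewrite Rmult_assoc, Rinv_l; lra. }
  set (w := (x - z) / h) in *.
  rewrite phi0_quadratic.
  2: { rewrite Rabs_mult, (Rabs_pos_eq u) by lra; pose proof (Rabs_pos w); nra. }
  assert (Hphi : / C1 * ((u * w) ^ 2 / 2) <= C1 * D ^ 2 / 2).
  { replace (C1 * D ^ 2 / 2) with (/ C1 * (u ^ 2 / 2)) by (unfold u; field; lra).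
    apply Rmult_le_compat_l; [left; apply Rinv_0_lt_compat; lra |].
    assert (w ^ 2 <= 1) by (rewrite <- (pow2_abs w); pose proof (Rabs_pos w); nra).
    nra. }
  assert (Hval : (1 - u) * f x + (1 - (1 - u)) * f z = f x - C1 * D ^ 2)
    by (unfold u, D; ring).
  lra.
Qed.

Lemma infconv_huber_le_neighbour x z :
  Rabs (x - z) <= h -> f z <= f x ->
  infconv f phi1 x <= f x - C1 / 2 * (f x - f z) ^ 2.
Proof.
  intros Hxz Hfz.
  destruct (huber_envelope_test_point x z Hxz ltac:(lra)) as [y Hy].
  eapply Rle_trans; [| exact Hy].
  apply (infconv_le _ _ _ _ (f x - / (2 * C1))), huber_envelope_minorant.
Qed.

End HuberEnvelope.

Lemma Dgrad_neighbour f h x0 x : convex f -> 0 < h -> valid_x0 f x0 ->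
  exists z, Rabs (x - z) <= h /\ f z <= f x /\ Dgrad f h x0 x = f x - f z.
Proof.
  intros Hconv Hh Hx0.
  assert (Hleft : Rabs (x - (x - h)) <= h)
    by (replace (x - (x - h)) with h by ring; rewrite Rabs_pos_eq; lra).
  assert (Hright : Rabs (x - (x + h)) <= h)
    by (replace (x - (x + h)) with (- h) by ring;
        rewrite Rabs_Ropp, Rabs_pos_eq; lra).
  destruct x0 as [r | |]; simpl in Hx0 |- *.
  - destruct (Rlt_dec (r + h) x) as [Hgt |].
    + exists (x - h); repeat split; [exact Hleft |].
      apply (convex_nondecreasing_right_of_min f Hconv r _ _ Hx0); lra.
    + destruct (Rle_dec (r - h) x) as [Hge |].
      * exists r; repeat split; [apply Rabs_le; lra | apply Hx0].
      * exists (x + h); repeat split; [exact Hright |].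
        apply (convex_nonincreasing_left_of_min f Hconv r _ _ Hx0); lra.
  - exists (x - h); repeat split; [exact Hleft |].
    apply (proj2 Hx0); lra.
  - exists (x + h); repeat split; [exact Hright |].
    apply (proj2 Hx0); lra.
Qed.

Theorem lemma2p3 (C1 h : R) (f : R -> R) (x0 : ext_point) :
  0 < C1 -> 0 < h ->
  convex f ->
  (forall x, exists l, upper_deriv f x l /\ Rabs l <= 1 / (C1 * h)) ->
  valid_x0 f x0 ->
  forall x : R,
    infconv f (fun z => / C1 * phi0 (z / h)) x
      <= f x - C1 / 2 * (Rabs (Dgrad f h x0 x)) ^ 2.
Proof.
  intros HC1 Hh Hconv Hderiv Hx0 x.
  destruct (Dgrad_neighbour f h x0 x Hconv Hh Hx0) as [z [Hxz [Hfz ->]]].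
  rewrite pow2_abs.
  apply infconv_huber_le_neighbour; try assumption.
  exact (convex_Lipschitz_of_upper_deriv f _ Hconv Hderiv).
Qed.
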